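(* Let $g_{00},g_{11},g_{22},g_{33}$ solve system (SL) with positive initial data satisfying $h_{22}\le h_{33}$. Then $g_{11}^{3/5}\,g_{22}$ is strictly increasing along the flow.
   Context: Let $\det h = h_{00}h_{11}h_{22}h_{33}$, $\beta = \frac{1}{6(\det h)^2}$, and $p(x,y,z) = x^4 - x^3(y+z) + x^2yz + x(-y^3+y^2z+yz^2-z^3) + y^4 - y^3z - yz^3 + z^4$, $q(x,y,z) = 5x^4 - 3x^3(y+z) + x^2yz + x(y^3-y^2z-yz^2+z^3) - 3y^4 + 3y^3z + 3yz^3 - 3z^4$. System (SL): $\dot g_{00} = -\beta\,p(-g_{11},g_{22},g_{33})\,g_{00}^3$, $\dot g_{11} = -\beta\,q(-g_{11},g_{22},g_{33})\,g_{00}^2g_{11}$, $\dot g_{22} = -\beta\,q(g_{22},-g_{11},g_{33})\,g_{00}^2g_{22}$, $\dot g_{33} = -\beta\,q(g_{33},-g_{11},g_{22})\,g_{00}^2g_{33}$, with $g_{ii}(0)=h_{ii}>0$. (This is Bach flow on $\mathbb{R}\times\widetilde{SL}(2,\mathbb{R})$ in a diagonalizing basis.) *)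

From Stdlib Require Import Reals Lra.
Open Scope R_scope.

Definition pSL (x y z : R) : R :=
  x^4 - x^3*(y+z) + x^2*y*z + x*(- y^3 + y^2*z + y*z^2 - z^3)
  + y^4 - y^3*z - y*z^3 + z^4.

Definition qSL (x y z : R) : R :=
  5*x^4 - 3*x^3*(y+z) + x^2*y*z + x*(y^3 - y^2*z - y*z^2 + z^3)
  - 3*y^4 + 3*y^3*z + 3*y*z^3 - 3*z^4.

(* beta = 1 / (6 (det h)^2), det h = h00 h11 h22 h33 *)
Definition betaSL (h00 h11 h22 h33 : R) : R :=
  1 / (6 * (h00 * h11 * h22 * h33)^2).

Definition solves_SL (h00 h11 h22 h33 T : R) (g00 g11 g22 g33 : R -> R) : Prop :=
  let b := betaSL h00 h11 h22 h33 in
  g00 0 = h00 /\ g11 0 = h11 /\ g22 0 = h22 /\ g33 0 = h33 /\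
  forall t, 0 <= t < T ->
    derivable_pt_lim g00 t
      (- b * pSL (- g11 t) (g22 t) (g33 t) * (g00 t)^3) /\
    derivable_pt_lim g11 t
      (- b * qSL (- g11 t) (g22 t) (g33 t) * (g00 t)^2 * g11 t) /\
    derivable_pt_lim g22 t
      (- b * qSL (g22 t) (- g11 t) (g33 t) * (g00 t)^2 * g22 t) /\
    derivable_pt_lim g33 t
      (- b * qSL (g33 t) (- g11 t) (g22 t) * (g00 t)^2 * g33 t).

(* Along the flow, d/dt log (g11^(3/5) g22) = -beta g00^2 (3/5 q(-g11,g22,g33) + q(g22,-g11,g33)).
   Every g_ii solves a linear equation g' = k g with continuous k, so it stays positive; so
   does g33 - g22, since z q(z,-a,y) - y q(y,-a,z) is divisible by z - y.  For a, y > 0 and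
   y <= z the bracket expands in d = z - y into a polynomial with only negative
   coefficients, so the logarithmic derivative is positive. *)

From Stdlib Require Import Reals Lra Ranalysis5.
Open Scope R_scope.

Lemma derivable_pt_lim_continuity_pt (f : R -> R) (t l : R) :
  derivable_pt_lim f t l -> continuity_pt f t.
Proof. intros Hf. apply derivable_continuous_pt. exists l. exact Hf. Qed.

Lemma derivable_pt_lim_eq (f : R -> R) (t l l' : R) :
  derivable_pt_lim f t l -> l = l' -> derivable_pt_lim f t l'.
Proof. now intros Hf <-. Qed.

Lemma nonneg_derivative_le (f f' : R -> R) (a b : R) :
  a <= b ->
  (forall c, a <= c <= b -> derivable_pt_lim f c (f' c)) ->
  (forall c, a <= c <= b -> 0 <= f' c) -> f a <= f b.
Proof.
  intros Hab Hd Hpos. destruct (Req_dec a b) as [<-|Hne]; [lra|].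
  destruct (MVT_cor2 f f' a b) as [c [Hfc Hc]]; [lra|exact Hd|].
  assert (0 <= f' c * (b - a)) by (apply Rmult_le_pos; [apply Hpos|]; lra).
  lra.
Qed.

Lemma pos_derivative_lt (f f' : R -> R) (a b : R) :
  a < b ->
  (forall c, a <= c <= b -> derivable_pt_lim f c (f' c)) ->
  (forall c, a <= c <= b -> 0 < f' c) -> f a < f b.
Proof.
  intros Hab Hd Hpos.
  destruct (MVT_cor2 f f' a b) as [c [Hfc Hc]]; [exact Hab|exact Hd|].
  assert (0 < f' c * (b - a)) by (apply Rmult_lt_0_compat; [apply Hpos|]; lra).
  lra.
Qed.

Lemma derivable_pt_lim_sq_exp (f : R -> R) (c t l : R) :
  derivable_pt_lim f t (l * f t) ->
  derivable_pt_lim (fun u => f u ^ 2 * exp (c * u)) t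
    (f t ^ 2 * exp (c * t) * (2 * l + c)).
Proof.
  intros Hf.
  apply (derivable_pt_lim_eq _ _
    (2 * f t ^ 1 * (l * f t) * exp (c * t) + f t ^ 2 * (exp (c * t) * c))).
  - apply (derivable_pt_lim_mult (fun u => f u ^ 2) (fun u => exp (c * u))).
    + apply (derivable_pt_lim_comp f (fun y => y ^ 2)); [exact Hf|].
      apply derivable_pt_lim_pow.
    + apply (derivable_pt_lim_comp (fun u => c * u) exp).
      * apply (derivable_pt_lim_eq _ _ (0 * t + c * 1)); [|ring].
        apply derivable_pt_lim_mult; [apply derivable_pt_lim_const|apply derivable_pt_lim_id].
      * apply derivable_pt_lim_exp.
  - ring.
Qed.

Section LinearODE.

Variables (f k : R -> R) (T : R).
Hypothesis f_deriv : forall t, 0 <= t < T -> derivable_pt_lim f t (k t * f t).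
Hypothesis k_cont : forall t, 0 <= t < T -> continuity_pt k t.

(* Gronwall: with |k| <= B on [0, t], the functions f^2 e^(2Bu) and
   f^2 e^(-2Bu) are respectively nondecreasing and nonincreasing. *)
Lemma linear_ode_sq_bounds (t : R) : 0 <= t < T -> exists M,
  f 0 ^ 2 * exp (- M * t) <= f t ^ 2 <= f 0 ^ 2 * exp (M * t).
Proof.
  intros Ht.
  destruct (continuity_ab_maj (fun u => Rabs (k u)) 0 t) as [m [Hm _]]; [lra| |].
  { intros c Hc. apply (continuity_pt_comp k Rabs); [apply k_cont; lra|].
    apply Rcontinuity_abs. }
  set (B := Rabs (k m)) in Hm.
  assert (HkB : forall c, 0 <= c <= t -> - B <= k c <= B).
  { intros c Hc. specialize (Hm c Hc). cbn beta in Hm.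
    revert Hm. unfold Rabs. destruct (Rcase_abs (k c)); destruct (Rcase_abs (k m)); lra. }
  exists (2 * B).
  assert (Hsq_exp : forall c M, 0 <= c <= t ->
    derivable_pt_lim (fun u => f u ^ 2 * exp (M * u)) c
      (f c ^ 2 * exp (M * c) * (2 * k c + M))).
  { intros c M Hc. apply derivable_pt_lim_sq_exp, f_deriv. lra. }
  assert (Hcancel : exp (- (2 * B) * t) * exp (2 * B * t) = 1).
  { rewrite <- exp_plus. replace (- (2 * B) * t + 2 * B * t) with 0 by ring.
    apply exp_0. }
  pose proof (exp_pos (2 * B * t)). pose proof (exp_pos (- (2 * B) * t)).
  pose proof (pow2_ge_0 (f t)).
  split.
  - assert (Hinc : f 0 ^ 2 * exp (2 * B * 0) <= f t ^ 2 * exp (2 * B * t)).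
    { apply (nonneg_derivative_le (fun u => f u ^ 2 * exp (2 * B * u))
        (fun c => f c ^ 2 * exp (2 * B * c) * (2 * k c + 2 * B)) 0 t);
        [lra|intros c Hc; now apply Hsq_exp|].
      intros c Hc. specialize (HkB c Hc). pose proof (exp_pos (2 * B * c)).
      pose proof (pow2_ge_0 (f c)). apply Rmult_le_pos; [apply Rmult_le_pos|]; lra. }
    rewrite Rmult_0_r, exp_0 in Hinc. nra.
  - assert (Hdec : - (f 0 ^ 2 * exp (- (2 * B) * 0))
                   <= - (f t ^ 2 * exp (- (2 * B) * t))).
    { apply (nonneg_derivative_le (fun u => - (f u ^ 2 * exp (- (2 * B) * u)))
        (fun c => - (f c ^ 2 * exp (- (2 * B) * c) * (2 * k c + - (2 * B)))) 0 t);
        [lra|intros c Hc; now apply derivable_pt_lim_opp, Hsq_exp|].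
      intros c Hc. specialize (HkB c Hc). pose proof (exp_pos (- (2 * B) * c)).
      pose proof (pow2_ge_0 (f c)).
      replace (- _) with (f c ^ 2 * exp (- (2 * B) * c) * (2 * B - 2 * k c)) by ring.
      apply Rmult_le_pos; [apply Rmult_le_pos|]; lra. }
    rewrite Rmult_0_r, exp_0 in Hdec.
    apply Rmult_le_compat_r with (r := exp (2 * B * t)) in Hdec; [|lra].
    replace (f t ^ 2) with (f t ^ 2 * exp (- (2 * B) * t) * exp (2 * B * t))
      by (rewrite Rmult_assoc, Hcancel; ring).
    lra.
Qed.

Lemma linear_ode_pos : 0 < f 0 -> forall t, 0 <= t < T -> 0 < f t.
Proof.
  intros H0.
  assert (Hnz : forall t, 0 <= t < T -> f t <> 0).
  { intros t Ht Hft. destruct (linear_ode_sq_bounds t Ht) as [M [Hlow _]].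
    rewrite Hft in Hlow. pose proof (exp_pos (- M * t)).
    assert (0 < f 0 ^ 2) by (apply pow_lt; lra). nra. }
  intros t Ht. destruct (Rlt_or_le 0 (f t)) as [|Hle]; [assumption|exfalso].
  assert (Hneg : f t < 0) by (pose proof (Hnz t Ht); lra).
  assert (Htpos : 0 < t) by (destruct (Req_dec t 0) as [->|]; lra).
  destruct (IVT_interv (fun u => - f u) 0 t) as [z [Hz Hfz]]; [|lra|lra|lra|].
  - intros u Hu. apply continuity_pt_opp.
    apply (derivable_pt_lim_continuity_pt _ _ _ (f_deriv u ltac:(lra))).
  - apply (Hnz z); lra.
Qed.

Lemma linear_ode_nonneg : 0 <= f 0 -> forall t, 0 <= t < T -> 0 <= f t.
Proof.
  intros [H0|H0] t Ht; [left; now apply linear_ode_pos|].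
  destruct (linear_ode_sq_bounds t Ht) as [M [_ Hup]].
  rewrite <- H0 in Hup. pose proof (pow2_ge_0 (f t)).
  assert (f t ^ 2 = 0) by (simpl in Hup; lra).
  right. symmetry. apply Rsqr_0_uniq. unfold Rsqr. lra.
Qed.

End LinearODE.

Lemma derivable_pt_lim_Rpower_mul (x y : R -> R) (a kx ky t : R) :
  0 < x t -> derivable_pt_lim x t (kx * x t) -> derivable_pt_lim y t (ky * y t) ->
  derivable_pt_lim (fun u => Rpower (x u) a * y u) t
    (Rpower (x t) a * y t * (a * kx + ky)).
Proof.
  intros Hx Dx Dy.
  assert (Hpow : Rpower (x t) a = Rpower (x t) (a - 1) * x t).
  { rewrite <- (Rpower_1 (x t)) at 3; [|lra]. rewrite <- Rpower_plus. f_equal. ring. }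
  eapply derivable_pt_lim_eq.
  - apply (derivable_pt_lim_mult (fun u => Rpower (x u) a) y); [|exact Dy].
    exact (derivable_pt_lim_comp x (fun z => Rpower z a) t _ _ Dx
             (derivable_pt_lim_power (x t) a Hx)).
  - rewrite Hpow. ring.
Qed.

Definition qSL_gap_factor (a y z : R) : R :=
  let d := z - y in
  5*d^4 + 25*y*d^3 + 49*y^2*d^2 + 48*y^3*d + 24*y^4
  + 3*a*d^3 + 14*a*y*d^2 + 24*a*y^2*d + 16*a*y^3
  - a^2*y*d - a^2*y^2 - a^3*d - 2*a^3*y - 3*a^4.

Lemma qSL_gap (a y z : R) :
  z * qSL z (- a) y - y * qSL y (- a) z = (z - y) * qSL_gap_factor a y z.
Proof. unfold qSL, qSL_gap_factor. ring. Qed.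

Lemma qSL_combination_neg (a y z : R) : 0 < a -> 0 < y -> y <= z ->
  3/5 * qSL (- a) y z + qSL y (- a) z < 0.
Proof.
  intros Ha Hy Hyz. set (d := z - y).
  assert (Hd : 0 <= d) by (unfold d; lra).
  replace z with (y + d) by (unfold d; ring). clearbody d.
  assert (Hsum : 0 <= 24*d^4 + 82*y*d^3 + 102*y^2*d^2 + 60*y^3*d + 18*a*d^3
    + 46*a*y*d^2 + 40*a*y^2*d + 2*a^2*y*d + 6*a^3*d + 2*a^3*y).
  { repeat (apply Rplus_le_le_0_compat || apply Rmult_le_pos || apply pow_le); lra. }
  assert (0 < a^2 * y^2) by (apply Rmult_lt_0_compat; apply pow_lt; lra).
  replace (3/5 * qSL (- a) y (y + d) + qSL y (- a) (y + d)) with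
    (- (1/5) * ((24*d^4 + 82*y*d^3 + 102*y^2*d^2 + 60*y^3*d + 18*a*d^3
      + 46*a*y*d^2 + 40*a*y^2*d + 2*a^2*y*d + 6*a^3*d + 2*a^3*y) + 2 * (a^2 * y^2)))
    by (unfold qSL; field).
  lra.
Qed.

Ltac solve_continuity_pt :=
  repeat (first [ apply continuity_pt_mult | apply continuity_pt_plus
    | apply continuity_pt_minus | apply continuity_pt_opp
    | apply continuity_pt_const; intros ? ?; reflexivity | assumption ]).

Section SLFlow.

Variables (b T : R) (g00 g11 g22 g33 : R -> R).
Hypothesis b_pos : 0 < b.
Hypotheses (g00_0 : 0 < g00 0) (g11_0 : 0 < g11 0) (g22_0 : 0 < g22 0).
Hypothesis g22_0_le_g33_0 : g22 0 <= g33 0.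
Hypothesis flow : forall t, 0 <= t < T ->
  derivable_pt_lim g00 t (- b * pSL (- g11 t) (g22 t) (g33 t) * (g00 t)^3) /\
  derivable_pt_lim g11 t (- b * qSL (- g11 t) (g22 t) (g33 t) * (g00 t)^2 * g11 t) /\
  derivable_pt_lim g22 t (- b * qSL (g22 t) (- g11 t) (g33 t) * (g00 t)^2 * g22 t) /\
  derivable_pt_lim g33 t (- b * qSL (g33 t) (- g11 t) (g22 t) * (g00 t)^2 * g33 t).

Lemma SL_continuity_pt (t : R) : 0 <= t < T ->
  continuity_pt g00 t /\ continuity_pt g11 t /\
  continuity_pt g22 t /\ continuity_pt (fun u => - g11 u) t /\ continuity_pt g33 t.
Proof.
  intros Ht. destruct (flow t Ht) as (D0 & D1 & D2 & D3).
  apply derivable_pt_lim_continuity_pt in D0, D1, D2, D3.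
  repeat split; try assumption. now apply continuity_pt_opp.
Qed.

Lemma SL_g00_pos (t : R) : 0 <= t < T -> 0 < g00 t.
Proof.
  apply (linear_ode_pos g00 (fun u => - b * pSL (- g11 u) (g22 u) (g33 u) * g00 u ^ 2));
    [| |exact g00_0]; intros u Hu.
  - eapply derivable_pt_lim_eq; [apply (flow u Hu)|ring].
  - destruct (SL_continuity_pt u Hu) as (C0 & C1 & C2 & C1' & C3).
    solve_continuity_pt.
Qed.

Lemma SL_g11_pos (t : R) : 0 <= t < T -> 0 < g11 t.
Proof.
  apply (linear_ode_pos g11 (fun u => - b * qSL (- g11 u) (g22 u) (g33 u) * g00 u ^ 2));
    [| |exact g11_0]; intros u Hu.
  - eapply derivable_pt_lim_eq; [apply (flow u Hu)|ring].
  - destruct (SL_continuity_pt u Hu) as (C0 & C1 & C2 & C1' & C3).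
    solve_continuity_pt.
Qed.

Lemma SL_g22_pos (t : R) : 0 <= t < T -> 0 < g22 t.
Proof.
  apply (linear_ode_pos g22 (fun u => - b * qSL (g22 u) (- g11 u) (g33 u) * g00 u ^ 2));
    [| |exact g22_0]; intros u Hu.
  - eapply derivable_pt_lim_eq; [apply (flow u Hu)|ring].
  - destruct (SL_continuity_pt u Hu) as (C0 & C1 & C2 & C1' & C3).
    solve_continuity_pt.
Qed.

(* By [qSL_gap], the gap [g33 - g22] itself solves a linear equation. *)
Lemma SL_g22_le_g33 (t : R) : 0 <= t < T -> g22 t <= g33 t.
Proof.
  intros Ht. apply Rge_le, Rminus_ge, Rle_ge.
  apply (linear_ode_nonneg (fun u => g33 u - g22 u)
    (fun u => - b * g00 u ^ 2 * qSL_gap_factor (g11 u) (g22 u) (g33 u)) T);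
    [| |lra|exact Ht]; intros u Hu.
  - destruct (flow u Hu) as (_ & _ & D2 & D3).
    eapply derivable_pt_lim_eq; [exact (derivable_pt_lim_minus _ _ _ _ _ D3 D2)|].
    transitivity (- b * g00 u ^ 2 * (g33 u * qSL (g33 u) (- g11 u) (g22 u)
                                     - g22 u * qSL (g22 u) (- g11 u) (g33 u))); [ring|].
    rewrite qSL_gap. ring.
  - destruct (SL_continuity_pt u Hu) as (C0 & C1 & C2 & C1' & C3).
    solve_continuity_pt.
Qed.

Lemma SL_Rpower_g11_g22_increasing (s t : R) : 0 <= s -> s < t -> t < T ->
  Rpower (g11 s) (3/5) * g22 s < Rpower (g11 t) (3/5) * g22 t.
Proof.
  intros Hs Hst HtT.
  apply (pos_derivative_lt (fun u => Rpower (g11 u) (3/5) * g22 u)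
    (fun u => Rpower (g11 u) (3/5) * g22 u *
    (3/5 * (- b * qSL (- g11 u) (g22 u) (g33 u) * g00 u ^ 2)
     + - b * qSL (g22 u) (- g11 u) (g33 u) * g00 u ^ 2)) s t Hst); intros c Hc;
    assert (Hc' : 0 <= c < T) by lra.
  - destruct (flow c Hc') as (_ & D1 & D2 & _).
    apply derivable_pt_lim_Rpower_mul; [now apply SL_g11_pos| |];
      (eapply derivable_pt_lim_eq; [eassumption|ring]).
  - pose proof (SL_g00_pos c Hc'). pose proof (SL_g22_pos c Hc').
    pose proof (qSL_combination_neg (g11 c) (g22 c) (g33 c)
      (SL_g11_pos c Hc') (SL_g22_pos c Hc') (SL_g22_le_g33 c Hc')).
    assert (0 < Rpower (g11 c) (3/5)) by apply exp_pos.
    replace (_ * _ * _) with (Rpower (g11 c) (3/5) * g22 c * (b * g00 c ^ 2) *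
      - (3/5 * qSL (- g11 c) (g22 c) (g33 c) + qSL (g22 c) (- g11 c) (g33 c))) by ring.
    assert (0 < g00 c ^ 2) by (apply pow_lt; lra).
    repeat apply Rmult_lt_0_compat; lra.
Qed.

End SLFlow.

Theorem lemma5p12 (h00 h11 h22 h33 T : R) (g00 g11 g22 g33 : R -> R) :
  0 < h00 -> 0 < h11 -> 0 < h22 -> 0 < h33 -> h22 <= h33 -> 0 < T ->
  solves_SL h00 h11 h22 h33 T g00 g11 g22 g33 ->
  forall s t, 0 <= s -> s < t -> t < T ->
    Rpower (g11 s) (3/5) * g22 s < Rpower (g11 t) (3/5) * g22 t.
Proof.
  intros H00 H11 H22 _ H23 _ Hsol.
  destruct Hsol as (E00 & E11 & E22 & E33 & Hflow).
  apply (SL_Rpower_g11_g22_increasing (betaSL h00 h11 h22 h33) T g00 g11 g22 g33);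
    [|rewrite E00|rewrite E11|rewrite E22|rewrite E22, E33|exact Hflow]; try lra.
  unfold betaSL. apply Rdiv_lt_0_compat; [lra|].
  apply Rmult_lt_0_compat; [lra|]. apply pow_lt.
  repeat apply Rmult_lt_0_compat; lra.
Qed.
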